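(* Let $I$ be an ideal on a cardinal $\kappa$ and $\theta<\kappa$ a regular cardinal. The following are equivalent: (1) $I$ is weakly $\theta$-saturated and $\theta$-indecomposable. (2) Whenever $\langle S_\alpha:\alpha<\kappa\rangle$ is a sequence of sets of ordinals with $|S_\alpha|<\theta$ for all $\alpha$, every $\leq$-increasing sequence $\langle h_i:i<\theta\rangle$ of functions in $\prod_{\alpha<\kappa}S_\alpha$ (i.e. $i<j$ implies $h_i(\alpha)\leq h_j(\alpha)$ for all $\alpha$) is eventually constant modulo $I$: there is $i^*<\theta$ with $\{\alpha: h_i(\alpha)\neq h_{i^*}(\alpha)\}\in I$ for all $i\geq i^*$.
   Context: By an ideal on a cardinal $\kappa$ we mean a proper ideal on $\kappa$ containing all bounded subsets of $\kappa$. $I$ is weakly $\theta$-saturated if there is no partition of $\kappa$ into $\theta$ pairwise disjoint sets not in $I$. $I$ is $\theta$-indecomposable if whenever $\langle A_i:i<\theta\rangle$ are subsets of $\kappa$ with $\bigcup_{i<\theta}A_i\notin I$, there is $w\subseteq\theta$ with $|w|<\theta$ and $\bigcup_{i\in w}A_i\notin I$. *)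

(* Sets are predicates X -> Prop.
   Cardinals/ordinals are represented by well-ordered types. *)

Definition full {X : Type} : X -> Prop := fun _ => True.

Definition card_le {X Y : Type} (A : X -> Prop) (B : Y -> Prop) : Prop :=
  exists f : {x : X | A x} -> {y : Y | B y}, forall a b, f a = f b -> a = b.

Definition card_lt {X Y : Type} (A : X -> Prop) (B : Y -> Prop) : Prop :=
  card_le A B /\ ~ card_le B A.

Definition well_order {X : Type} (lt : X -> X -> Prop) : Prop :=
  well_founded lt /\
  (forall x y z, lt x y -> lt y z -> lt x z) /\
  (forall x, ~ lt x x) /\
  (forall x y, lt x y \/ x = y \/ lt y x).

Definition is_cardinal {X : Type} (lt : X -> X -> Prop) : Prop :=
  well_order lt /\ forall x : X, card_lt (fun y => lt y x) (@full X).

Definition infinite_type (X : Type) : Prop := card_le (@full nat) (@full X).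

Definition regular_cardinal {X : Type} (lt : X -> X -> Prop) : Prop :=
  is_cardinal lt /\ infinite_type X /\
  forall A : X -> Prop,
    (forall x, exists y, A y /\ ~ lt y x) -> ~ card_lt A (@full X).

Definition is_ideal {K : Type} (ltK : K -> K -> Prop)
    (I : (K -> Prop) -> Prop) : Prop :=
  ~ I (@full K) /\
  (forall A B : K -> Prop, I B -> (forall a, A a -> B a) -> I A) /\
  (forall A B : K -> Prop, I A -> I B -> I (fun a => A a \/ B a)) /\
  (forall A : K -> Prop, (exists b, forall a, A a -> ltK a b) -> I A).

Definition weakly_saturated {K : Type} (Th : Type)
    (I : (K -> Prop) -> Prop) : Prop :=
  ~ exists P : Th -> K -> Prop,
      (forall i j a, i <> j -> P i a -> P j a -> False) /\
      (forall a, exists i, P i a) /\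
      (forall i, ~ I (P i)).

Definition indecomposable {K : Type} (Th : Type)
    (I : (K -> Prop) -> Prop) : Prop :=
  forall A : Th -> K -> Prop,
    ~ I (fun a => exists i, A i a) ->
    exists w : Th -> Prop,
      card_lt w (@full Th) /\ ~ I (fun a => exists i, w i /\ A i a).

From Stdlib Require Import Classical ClassicalEpsilon FunctionalExtensionality.

(* Both conditions are equivalent to: every p : K -> Th is bounded modulo I,
   i.e. {a | t < p a} is in I for some t.  An increasing sequence of functions
   whose values at a range over a set of size < theta is constant at a from some
   stage on (regularity), so the second condition says that this stabilization
   stage is bounded modulo I; conversely the truncations i |-> min(i, p) form such a sequence.
   Boundedness gives saturation and indecomposability at once.  If p is unbounded,
   indecomposability yields for every t some f t > t with {a | t < p a <= f t}
   positive, and a set of theta many stages t that f does not jump over gives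
   theta pairwise disjoint positive sets. *)

Lemma sig_eq {X} (A : X -> Prop) (a b : {x | A x}) :
  proj1_sig a = proj1_sig b -> a = b.
Proof. destruct a as [x p], b as [y q]; simpl; intros ->. f_equal; apply proof_irrelevance. Qed.

Lemma card_le_trans {X Y Z} (A : X -> Prop) (B : Y -> Prop) (C : Z -> Prop) :
  card_le A B -> card_le B C -> card_le A C.
Proof. intros [f Hf] [g Hg]. exists (fun a => g (f a)). intros a b H. apply Hf, Hg, H. Qed.

Lemma card_le_inj {X Y} (A : X -> Prop) (B : Y -> Prop) (f : X -> Y) :
  (forall x, A x -> B (f x)) ->
  (forall x y, A x -> A y -> f x = f y -> x = y) -> card_le A B.
Proof.
  intros fAB finj. exists (fun x => exist B (f (proj1_sig x)) (fAB _ (proj2_sig x))).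
  intros [x Ax] [y Ay] E. apply sig_eq; simpl.
  apply (f_equal (@proj1_sig _ _)) in E. exact (finj x y Ax Ay E).
Qed.

Lemma card_le_sub {X} (A B : X -> Prop) : (forall x, A x -> B x) -> card_le A B.
Proof. intros H. apply card_le_inj with (fun x => x); auto. Qed.

Lemma card_le_full {X} (A : X -> Prop) : card_le A (@full X).
Proof. apply card_le_sub. intros; exact Logic.I. Qed.

Lemma card_le_image {X Y} (f : X -> Y) (A : X -> Prop) :
  card_le (fun y => exists x, A x /\ f x = y) A.
Proof.
  assert (pre : forall y : {y | exists x, A x /\ f x = y}, {x | A x /\ f x = proj1_sig y})
    by (intro y; apply constructive_indefinite_description, (proj2_sig y)).
  exists (fun y => exist A (proj1_sig (pre y)) (proj1 (proj2_sig (pre y)))).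
  intros y1 y2 E. apply (f_equal (@proj1_sig _ _)) in E; simpl in E. apply sig_eq.
  rewrite <- (proj2 (proj2_sig (pre y1))), <- (proj2 (proj2_sig (pre y2))), E.
  reflexivity.
Qed.

Lemma card_le_full_inj {X Y} (B : Y -> Prop) :
  card_le (@full X) B ->
  exists g : X -> Y, (forall x, B (g x)) /\ (forall x y, g x = g y -> x = y).
Proof.
  intros [g Hg]. exists (fun x => proj1_sig (g (exist full x Logic.I))). split.
  - intro x. exact (proj2_sig (g (exist full x Logic.I))).
  - intros x y E. apply sig_eq, Hg, (f_equal (@proj1_sig _ _)) in E. exact E.
Qed.

Lemma card_le_lt_full {X Y W} (A : X -> Prop) (B : Y -> Prop) :
  card_le A B -> card_lt B (@full W) -> card_lt A (@full W).
Proof.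
  intros AB [BW nWB]. split.
  - exact (card_le_trans _ _ _ AB BW).
  - intro WA. exact (nWB (card_le_trans _ _ _ WA AB)).
Qed.

Lemma wf_min {X} (R : X -> X -> Prop) (P : X -> Prop) : well_founded R ->
  forall y, P y -> exists m, P m /\ forall k, R k m -> ~ P k.
Proof.
  intros wf y. induction y as [y IH] using (well_founded_ind wf). intro Py.
  destruct (classic (exists k, R k y /\ P k)) as [[k [Rk Pk]]|N].
  - exact (IH k Rk Pk).
  - exists y; split; auto. intros k Rk Pk; apply N; eauto.
Qed.

Definition bounded_mod {K Th : Type} (I : (K -> Prop) -> Prop)
    (ltT : Th -> Th -> Prop) (p : K -> Th) : Prop :=
  exists t, I (fun a => ltT t (p a)).

Definition increasing_sequences_stabilize {K Th : Type}
    (I : (K -> Prop) -> Prop) (ltT : Th -> Th -> Prop) : Prop :=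
  forall (O : Type) (ltO : O -> O -> Prop), well_order ltO ->
  forall S : K -> O -> Prop,
    (forall a, card_lt (S a) (@full Th)) ->
  forall h : Th -> K -> O,
    (forall i a, S a (h i a)) ->
    (forall i j a, ltT i j -> ltO (h i a) (h j a) \/ h i a = h j a) ->
    exists istar : Th,
      forall i, ~ ltT i istar -> I (fun a => h i a <> h istar a).

Section RegularCardinal.
Variables (Th : Type) (ltT : Th -> Th -> Prop).
Hypothesis HT : regular_cardinal ltT.

Lemma ltT_wf : well_founded ltT.
Proof. destruct HT as [[[wf _] _] _]; exact wf. Qed.

Lemma ltT_trans x y z : ltT x y -> ltT y z -> ltT x z.
Proof. destruct HT as [[[_ [tr _]] _] _]; exact (tr x y z). Qed.

Lemma ltT_irrefl x : ~ ltT x x.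
Proof. destruct HT as [[[_ [_ [irr _]]] _] _]; exact (irr x). Qed.

Lemma ltT_total x y : ltT x y \/ x = y \/ ltT y x.
Proof. destruct HT as [[[_ [_ [_ tot]]] _] _]; exact (tot x y). Qed.

Lemma ltT_asym x y : ltT x y -> ~ ltT y x.
Proof. intros Hxy Hyx. exact (ltT_irrefl x (ltT_trans _ _ _ Hxy Hyx)). Qed.

Lemma nlt_trans i j k : ~ ltT j i -> ~ ltT k j -> ~ ltT k i.
Proof.
  intros Hji Hkj Hki. destruct (ltT_total j k) as [H|[<-|H]]; auto.
  exact (Hji (ltT_trans _ _ _ H Hki)).
Qed.

Lemma lt_nlt_trans i j k : ltT i j -> ~ ltT k j -> ltT i k.
Proof.
  intros Hij Hkj. destruct (ltT_total j k) as [H|[<-|H]]; [|exact Hij|contradiction].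
  exact (ltT_trans _ _ _ Hij H).
Qed.

Lemma nlt_lt_trans i j k : ~ ltT j i -> ltT j k -> ltT i k.
Proof.
  intros Hji Hjk. destruct (ltT_total i j) as [H|[->|H]]; [|exact Hjk|contradiction].
  exact (ltT_trans _ _ _ H Hjk).
Qed.

Lemma segment_small x : card_lt (fun y => ltT y x) (@full Th).
Proof. destruct HT as [[_ seg] _]; apply seg. Qed.

Lemma small_bounded (A : Th -> Prop) :
  card_lt A (@full Th) -> exists x, forall y, A y -> ltT y x.
Proof.
  intros cA. destruct HT as [_ [_ regular]]. apply NNPP; intro N.
  apply (regular A); [|exact cA]. intro x. apply NNPP; intro Hx.
  apply N. exists x. intros y Ay. apply NNPP; intro nyx. apply Hx; eauto.
Qed.

Lemma regular_inhabited : inhabited Th.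
Proof. destruct HT as [_ [[e _] _]]. exact (inhabits (proj1_sig (e (exist _ 0 Logic.I)))). Qed.

Lemma exists_gt t : exists x, ltT t x.
Proof.
  destruct (small_bounded (fun y => y = t)) as [x Hx].
  - split; [apply card_le_full|]. intro Hle.
    destruct (card_le_full_inj _ Hle) as [g [gt ginj]].
    destruct HT as [_ [[e einj] _]].
    assert (E : proj1_sig (e (exist full 0 Logic.I)) = proj1_sig (e (exist full 1 Logic.I)))
      by (apply ginj; rewrite gt, gt; reflexivity).
    apply sig_eq, einj, (f_equal (@proj1_sig _ _)) in E. discriminate E.
  - exists x. exact (Hx t eq_refl).
Qed.

Lemma exists_separated_full (f : Th -> Th) :
  exists Z : Th -> Prop, card_le (@full Th) Z /\
    forall z z', Z z -> Z z' -> ltT z' z -> ~ ltT z (f z').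
Proof.
  set (Z := Fix ltT_wf (fun _ => Prop)
              (fun z rec => forall z' (hz : ltT z' z), rec z' hz -> ~ ltT z (f z'))).
  assert (Z_eq : forall z, Z z = forall z', ltT z' z -> Z z' -> ~ ltT z (f z')).
  { intro z. unfold Z at 1. rewrite Fix_eq; [reflexivity|].
    intros x g1 g2 Hg. replace g2 with g1; [reflexivity|].
    extensionality y; extensionality q; apply Hg. }
  exists Z. split.
  2: { intros z z' Zz Zz' Hlt. rewrite Z_eq in Zz. exact (Zz z' Hlt Zz'). }
  destruct HT as [_ [_ regular]]. apply NNPP; intro small.
  apply (regular Z); [|split; [apply card_le_full|exact small]].
  intro x. apply NNPP; intro Hx.
  assert (Zx : forall y, Z y -> ltT y x) by (intros y Zy; apply NNPP; intro; apply Hx; eauto).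
  (* Z lies below x, so its image under f is small and bounded by some b;
     any y >= x, b then lies in Z, a contradiction. *)
  destruct (small_bounded (fun y => exists z, Z z /\ f z = y)) as [b Hb].
  { apply card_le_lt_full with Z; [apply card_le_image|].
    apply card_le_lt_full with (fun y => ltT y x); [exact (card_le_sub _ _ Zx)|].
    apply segment_small. }
  assert (upper : exists y, ~ ltT y x /\ ~ ltT y b).
  { destruct (ltT_total x b) as [H|[<-|H]].
    - exists b. split; [exact (ltT_asym _ _ H)|apply ltT_irrefl].
    - exists x. split; apply ltT_irrefl.
    - exists x. split; [apply ltT_irrefl|exact (ltT_asym _ _ H)]. }
  destruct upper as [y [yx yb]]. apply yx, Zx. rewrite Z_eq.
  intros z' _ Zz' Hlt. exact (yb (ltT_trans _ _ _ Hlt (Hb _ (ex_intro _ z' (conj Zz' eq_refl))))).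
Qed.

Lemma increasing_small_range_stabilizes {O : Type} (ltO : O -> O -> Prop)
    (S : O -> Prop) (u : Th -> O) :
  (forall x y z, ltO x y -> ltO y z -> ltO x z) -> (forall x, ~ ltO x x) ->
  card_lt S (@full Th) -> (forall i, S (u i)) ->
  (forall i j, ltT i j -> ltO (u i) (u j) \/ u i = u j) ->
  exists i, forall j, ~ ltT j i -> u j = u i.
Proof.
  intros trO irrO cS Su mono.
  assert (mono_le : forall i j, ~ ltT j i -> ltO (u i) (u j) \/ u i = u j).
  { intros i j H. destruct (ltT_total i j) as [?|[<-|?]]; auto; contradiction. }
  set (jump := fun i => forall k, ltT k i -> u k <> u i).
  assert (small_jump : card_lt jump (@full Th)).
  { apply card_le_lt_full with S; [|exact cS].
    apply card_le_inj with u; [intros; apply Su|].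
    intros i i' Ji Ji' E. destruct (ltT_total i i') as [l|[e|l]]; auto; exfalso.
    - exact (Ji' i l E).
    - exact (Ji i' l (eq_sym E)). }
  destruct (small_bounded jump small_jump) as [x Hx]. exists x. intros j Hj.
  destruct (wf_min ltT (fun m => u m = u j) ltT_wf j eq_refl) as [j0 [E0 M0]].
  assert (j0x : ltT j0 x) by (apply Hx; intros k Hk E; apply (M0 k Hk); congruence).
  (* u j = u j0 <= u x <= u j *)
  destruct (mono j0 x j0x) as [l1|e1], (mono_le x j Hj) as [l2|e2]; try congruence;
    exfalso; apply (irrO (u j)); rewrite <- E0 at 1; eauto; congruence.
Qed.

End RegularCardinal.

Section IdealOnCardinal.
Variables (K : Type) (ltK : K -> K -> Prop) (I : (K -> Prop) -> Prop).
Hypothesis HI : is_ideal ltK I.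

Lemma ideal_subset (A B : K -> Prop) : I B -> (forall a, A a -> B a) -> I A.
Proof. destruct HI as [_ [down _]]; exact (down A B). Qed.

Lemma ideal_union (A B : K -> Prop) : I A -> I B -> I (fun a => A a \/ B a).
Proof. destruct HI as [_ [_ [union _]]]; exact (union A B). Qed.

Lemma ideal_empty : inhabited K -> I (fun _ => False).
Proof.
  intros [k]. destruct HI as [_ [_ [_ bnd]]]. apply bnd. exists k. intros a [].
Qed.

Variables (Th : Type) (ltT : Th -> Th -> Prop).
Hypothesis HT : regular_cardinal ltT.

Lemma weakly_saturated_no_disjoint_family (P : Th -> K -> Prop) :
  weakly_saturated Th I ->
  (forall i j a, i <> j -> P i a -> P j a -> False) -> (forall i, ~ I (P i)) -> False.
Proof.
  intros WS disj pos. destruct (regular_inhabited _ _ HT) as [t0].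
  apply WS. exists (fun i a => P i a \/ (i = t0 /\ forall j, ~ P j a)). split; [|split].
  - intros i j a nij [Hi|[-> Hi]] [Hj|[-> Hj]].
    + exact (disj i j a nij Hi Hj).
    + exact (Hj i Hi).
    + exact (Hi j Hj).
    + exact (nij eq_refl).
  - intro a. destruct (classic (exists j, P j a)) as [[j Hj]|N].
    + exists j. left. exact Hj.
    + exists t0. right. split; [reflexivity|]. intros j Hj. apply N. exists j; exact Hj.
  - intros i Hi. apply (pos i), (ideal_subset _ _ Hi). intros a Ha. left; exact Ha.
Qed.

Lemma indecomposable_interval (p : K -> Th) (t : Th) :
  indecomposable Th I -> I (fun _ => False) -> ~ I (fun a => ltT t (p a)) ->
  exists b, ltT t b /\ ~ I (fun a => ltT t (p a) /\ ~ ltT b (p a)).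
Proof.
  intros IND I0 Ht.
  destruct (IND (fun j a => p a = j /\ ltT t j)) as [w [cw Hw]].
  { intro HU. apply Ht, (ideal_subset _ _ HU). intros a Ha. exists (p a); auto. }
  destruct (small_bounded _ _ HT w cw) as [b Hb].
  assert (pos : ~ I (fun a => ltT t (p a) /\ ~ ltT b (p a))).
  { intro Hc. apply Hw, (ideal_subset _ _ Hc). intros a [j [wj [<- tj]]].
    split; [exact tj|]. exact (ltT_asym _ _ HT _ _ (Hb _ wj)). }
  exists b. split; [|exact pos].
  apply NNPP; intro nb. apply pos, (ideal_subset _ _ I0). intros a [ta pb].
  exact (nb (lt_nlt_trans _ _ HT _ _ _ ta pb)).
Qed.

Lemma saturated_indecomposable_bounded :
  inhabited K -> weakly_saturated Th I -> indecomposable Th I ->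
  forall p, bounded_mod I ltT p.
Proof.
  intros HK WS IND p. apply NNPP; intro unbounded.
  assert (step : forall t, exists b,
             ltT t b /\ ~ I (fun a => ltT t (p a) /\ ~ ltT b (p a))).
  { intro t. apply indecomposable_interval; [exact IND|exact (ideal_empty HK)|].
    intro Ht. apply unbounded. exists t; exact Ht. }
  destruct (choice _ step) as [f Hf].
  destruct (exists_separated_full _ _ HT f) as [Z [cZ sep]].
  destruct (card_le_full_inj _ cZ) as [g [Zg ginj]].
  apply (weakly_saturated_no_disjoint_family
           (fun i a => ltT (g i) (p a) /\ ~ ltT (f (g i)) (p a))); [exact WS| |].
  - assert (apart : forall i j a, ltT (g i) (g j) ->
                      ~ ltT (f (g i)) (p a) -> ltT (g j) (p a) -> False).
    { intros i j a l Hi Hj.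
      exact (nlt_trans _ _ HT _ _ _ Hi (sep _ _ (Zg j) (Zg i) l) Hj). }
    intros i j a nij [Hi Hi'] [Hj Hj'].
    destruct (ltT_total _ _ HT (g i) (g j)) as [l|[e|l]].
    + exact (apart i j a l Hi' Hj).
    + exact (nij (ginj _ _ e)).
    + exact (apart j i a l Hj' Hi).
  - intro i. exact (proj2 (Hf (g i))).
Qed.

Lemma bounded_weakly_saturated :
  (forall p, bounded_mod I ltT p) -> weakly_saturated Th I.
Proof.
  intros Hb [P [disj [cover pos]]].
  destruct (choice (fun a i => P i a) cover) as [p Hp].
  destruct (Hb p) as [t Ht]. destruct (exists_gt _ _ HT t) as [x Hx].
  apply (pos x), (ideal_subset _ _ Ht). intros a Pxa.
  destruct (classic (p a = x)) as [->|ne]; [exact Hx|].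
  exfalso. exact (disj _ _ a ne (Hp a) Pxa).
Qed.

Lemma bounded_indecomposable :
  (forall p, bounded_mod I ltT p) -> indecomposable Th I.
Proof.
  intros Hb A HU. destruct (regular_inhabited _ _ HT) as [t0].
  assert (witness : forall a, exists i, (exists j, A j a) -> A i a).
  { intro a. destruct (classic (exists j, A j a)) as [[j Hj]|N].
    - exists j. intros _. exact Hj.
    - exists t0. intro E. contradiction. }
  destruct (choice _ witness) as [p Hp].
  destruct (Hb p) as [t Ht]. destruct (exists_gt _ _ HT t) as [x Hx].
  exists (fun j => ltT j x). split; [apply segment_small, HT|]. intro Hw.
  apply HU, (ideal_subset _ _ (ideal_union _ _ Ht Hw)). intros a Ha.
  destruct (classic (ltT t (p a))) as [l|nl]; [left; exact l|right].
  exists (p a). split; [exact (nlt_lt_trans _ _ HT _ _ _ nl Hx)|exact (Hp a Ha)].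
Qed.

Lemma bounded_increasing_stabilize :
  (forall p, bounded_mod I ltT p) -> increasing_sequences_stabilize I ltT.
Proof.
  intros Hb O ltO [_ [trO [irrO _]]] S HS h Sh mono.
  assert (stab : forall a, exists i, forall j, ~ ltT j i -> h j a = h i a).
  { intro a. apply (increasing_small_range_stabilizes _ _ HT ltO (S a)); auto. }
  destruct (choice _ stab) as [p Hp].
  destruct (Hb p) as [t Ht]. exists t. intros i Hi. apply (ideal_subset _ _ Ht).
  intros a Hne. apply NNPP; intro Hle. apply Hne.
  rewrite (Hp a i), (Hp a t); [reflexivity|exact Hle|].
  exact (nlt_trans _ _ HT _ _ _ Hle Hi).
Qed.

Lemma increasing_stabilize_bounded :
  increasing_sequences_stabilize I ltT -> forall p, bounded_mod I ltT p.
Proof.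
  intros H2 p.
  set (h := fun i a => if excluded_middle_informative (ltT i (p a)) then i else p a).
  destruct (H2 Th ltT (proj1 (proj1 HT)) (fun a j => ~ ltT (p a) j) ) with (h := h)
    as [istar Hst].
  - intro a. destruct (exists_gt _ _ HT (p a)) as [x Hx].
    apply card_le_lt_full with (fun y => ltT y x); [|apply segment_small, HT].
    apply card_le_sub. intros j Hj. exact (nlt_lt_trans _ _ HT _ _ _ Hj Hx).
  - intros i a. unfold h. destruct excluded_middle_informative as [l|_].
    + exact (ltT_asym _ _ HT _ _ l).
    + apply ltT_irrefl, HT.
  - intros i j a Hij. unfold h.
    destruct (excluded_middle_informative (ltT i (p a))) as [li|ni],
             (excluded_middle_informative (ltT j (p a))) as [lj|nj].
    + left; exact Hij.
    + left; exact li.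
    + exfalso. exact (ni (ltT_trans _ _ HT _ _ _ Hij lj)).
    + right; reflexivity.
  - exists istar. destruct (exists_gt _ _ HT istar) as [x Hx].
    apply (ideal_subset _ _ (Hst x (ltT_asym _ _ HT _ _ Hx))). intros a Ha. unfold h.
    destruct (excluded_middle_informative (ltT x (p a))),
             (excluded_middle_informative (ltT istar (p a))); try contradiction.
    + intro E. rewrite E in Hx. exact (ltT_irrefl _ _ HT _ Hx).
    + intro E. rewrite E in Ha. exact (ltT_irrefl _ _ HT _ Ha).
Qed.

End IdealOnCardinal.

Theorem proposition2p4 (K : Type) (ltK : K -> K -> Prop)
    (Th : Type) (ltT : Th -> Th -> Prop) (I : (K -> Prop) -> Prop) :
  is_cardinal ltK ->
  regular_cardinal ltT ->
  card_lt (@full Th) (@full K) ->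
  is_ideal ltK I ->
  ((weakly_saturated Th I /\ indecomposable Th I) <->
   (forall (O : Type) (ltO : O -> O -> Prop), well_order ltO ->
    forall S : K -> O -> Prop,
      (forall a, card_lt (S a) (@full Th)) ->
    forall h : Th -> K -> O,
      (forall i a, S a (h i a)) ->
      (forall i j a, ltT i j -> ltO (h i a) (h j a) \/ h i a = h j a) ->
      exists istar : Th,
        forall i, ~ ltT i istar -> I (fun a => h i a <> h istar a))).
Proof.
  intros _ HT HTK HI.
  destruct (regular_inhabited _ _ HT) as [t0].
  assert (HK : inhabited K).
  { destruct HTK as [[e _] _]. exact (inhabits (proj1_sig (e (exist _ t0 Logic.I)))). }
  change (weakly_saturated Th I /\ indecomposable Th I <->
          increasing_sequences_stabilize I ltT).
  split.
  - intros [WS IND]. apply (bounded_increasing_stabilize _ _ _ HI _ _ HT).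
    exact (saturated_indecomposable_bounded _ _ _ HI _ _ HT HK WS IND).
  - intros H2.
    pose proof (increasing_stabilize_bounded _ _ _ HI _ _ HT H2) as Hb.
    split; [exact (bounded_weakly_saturated _ _ _ HI _ _ HT Hb)
           |exact (bounded_indecomposable _ _ _ HI _ _ HT Hb)].
Qed.
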